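(* Let $s\ge 3$, $b\ge1$, $n=sb$ and $V=\mathbb{F}_2^n=V_1\oplus\cdots\oplus V_b$ with $V_j\cong\mathbb{F}_2^s$ (the $j$-th block of $s$ consecutive coordinates). Let $\mathbf{b}\in\mathbb{F}_2^{s-2}$ be nonzero, let $\circ_{\mathbf b}$ be the operation on $\mathbb{F}_2^s$ given by $$x\circ_{\mathbf b} y=x+y+(x_1y_2+x_2y_1)\,(0,0,\mathbf{b}),$$ and let $\circ$ be the parallel operation on $V$ applying $\circ_{\mathbf b}$ on each block $V_j$. Let $\lambda\in\mathbb{F}_2^{n\times n}$ (acting on row vectors by $x\mapsto x\lambda$), and write $\lambda$ in $b\times b$ blocks of size $s\times s$, the $(i,j)$ block being further partitioned as $\begin{pmatrix}A_{ij}&B_{ij}\\ C_{ij}&D_{ij}\end{pmatrix}$ with $A_{ij}\in\mathbb{F}_2^{2\times2}$, $B_{ij}\in\mathbb{F}_2^{2\times(s-2)}$, $C_{ij}\in\mathbb{F}_2^{(s-2)\times2}$, $D_{ij}\in\mathbb{F}_2^{(s-2)\times(s-2)}$. Then $\lambda\in H_\circ$ if and only if: (1) for each block-row index $i$ there is exactly one $j$ with $A_{ij}\neq0$, and for each block-column index $j$ exactly one $i$ with $A_{ij}\ne 0$; moreover every nonzero $A_{ij}$ is invertible; (2) $B_{ij}$ are arbitrary; (3) $C_{ij}=0$ for all $i,j$; (4) for all $i,j$: if $A_{ij}=0$ then $\mathbf{b}D_{ij}=\mathbf{0}$, and if $A_{ij}$ is invertible then $\mathbf{b}D_{ij}=\mathbf{b}$;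 moreover the $b(s-2)\times b(s-2)$ matrix $D=(D_{ij})_{i,j}$ is invertible.
   Context: $+$ is xor on $V$. For an operation $\circ$ on $V$ making $(V,\circ)$ an elementary abelian $2$-group whose translations $x\mapsto x\circ a$ are xor-affine, $H_\circ$ denotes the group of maps $f\in\mathrm{GL}(V,+)$ such that $(a\circ b)f=af\circ bf$ for all $a,b\in V$ (maps written in postfix notation). The operation $\circ_{\mathbf b}$ is an alternative operation on $\mathbb{F}_2^s$ whose weak key space $\{k: x\circ_{\mathbf b}k=x+k\ \forall x\}$ is spanned by the last $s-2$ canonical vectors. *)

From mathcomp Require Import all_boot all_algebra.
Set Implicit Arguments. Unset Strict Implicit. Unset Printing Implicit Defensive.
Import GRing.Theory.
Local Open Scope ring_scope.

(* Throughout, s = 2 + t (so s >= 3 iff t >= 1), and V = F_2^(b*s) is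
   identified with b x s matrices via mxvec / vec_mx: coordinate
   mxvec_index j k (= j*s + k in the library's enumeration order) is the k-th coordinate of
   the j-th block V_j. *)


Definition circb (t : nat) (bv : 'rV['F_2]_t) (x y : 'rV['F_2]_(2 + t)) : 'rV['F_2]_(2 + t) :=
  x + y + (x 0 (lshift t (0 : 'I_2)) * y 0 (lshift t (1 : 'I_2))
           + x 0 (lshift t (1 : 'I_2)) * y 0 (lshift t (0 : 'I_2))) *: row_mx 0 bv.

Definition vblock (b t : nat) (x : 'rV['F_2]_(b * (2 + t))) (j : 'I_b) : 'rV['F_2]_(2 + t) :=
  row j (vec_mx x).

Definition circV (b t : nat) (bv : 'rV['F_2]_t) (x y : 'rV['F_2]_(b * (2 + t))) :
  'rV['F_2]_(b * (2 + t)) :=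
  mxvec (\matrix_(j < b) circb bv (vblock x j) (vblock y j)).

Definition in_H (b t : nat) (bv : 'rV['F_2]_t) (lam : 'M['F_2]_(b * (2 + t))) : Prop :=
  lam \in unitmx /\
  forall x y : 'rV['F_2]_(b * (2 + t)),
    circV bv x y *m lam = circV bv (x *m lam) (y *m lam).

Definition mblock (b t : nat) (lam : 'M['F_2]_(b * (2 + t))) (i j : 'I_b) : 'M['F_2]_(2 + t) :=
  \matrix_(k, l) lam (mxvec_index i k) (mxvec_index j l).

Definition Ablk b t (lam : 'M['F_2]_(b * (2 + t))) i j : 'M['F_2]_2 := ulsubmx (mblock lam i j).
Definition Bblk b t (lam : 'M['F_2]_(b * (2 + t))) i j : 'M['F_2]_(2, t) := ursubmx (mblock lam i j).
Definition Cblk b t (lam : 'M['F_2]_(b * (2 + t))) i j : 'M['F_2]_(t, 2) := dlsubmx (mblock lam i j).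
Definition Dblk b t (lam : 'M['F_2]_(b * (2 + t))) i j : 'M['F_2]_t := drsubmx (mblock lam i j).

Definition Dbig b t (lam : 'M['F_2]_(b * (2 + t))) : 'M['F_2]_(b * t) :=
  \matrix_(p, q) (let: isMxvecIndex i k := mxvec_indexP p in
                  let: isMxvecIndex j l := mxvec_indexP q in
                  Dblk lam i j k l).

(* Over F_2 the operation reads x o y = x + y + crossV x y, where crossV x y is
   sum_j omega_j(x, y) e_j, omega_j(x, y) = x_j1 y_j2 + x_j2 y_j1 is the alternating form on the
   first two coordinates of block j, and e_j is (0, 0, b) placed in block j.  So a linear lam lies
   in H iff it is invertible and maps crossV x y to crossV (x lam) (y lam).  As the e_j are
   independent, this splits into e_i lam = sum_j det(A_ij) e_j, which is condition (4), and
   omega_j(x lam, y lam) = sum_l det(A_lj) omega_l(x, y).  The left side of the latter is the form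
   u ^ v of the two columns of lam through the first coordinates of block j; these columns are
   independent, and evaluating on basis vectors forces them to live on the first two coordinates
   of a single block f j, with det A_(f j, j) = 1.  This is (3) and the column half of (1); the
   same argument for lam^-1 makes f a permutation and D invertible.  Conversely, under (1)-(4)
   lam is block triangular up to the permutation f, hence invertible, and both identities hold. *)

From mathcomp Require Import all_boot all_algebra.
Set Implicit Arguments. Unset Strict Implicit. Unset Printing Implicit Defensive.
Import GRing.Theory.
Local Open Scope ring_scope.

Lemma F2_cases (x : 'F_2) : x = 0 \/ x = 1.
Proof. by case: x => [[|[|m]] Hm]; [left|right|]; try apply: val_inj. Qed.

Lemma F2_oppr (x : 'F_2) : - x = x.
Proof. by case: (F2_cases x) => ->; apply/eqP. Qed.

Lemma unitmx_F2 n (A : 'M['F_2]_n) : (A \in unitmx) = (\det A == 1).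
Proof. by rewrite unitmxE unitfE; case: (F2_cases (\det A)) => ->. Qed.

Lemma det_scaleP n (A : 'M['F_2]_2) (v w : 'rV['F_2]_n) : (A != 0 -> A \in unitmx) ->
  ((A = 0 -> w = 0) /\ (A \in unitmx -> w = v)) <-> w = \det A *: v.
Proof.
have [-> _ | nzA /(_ isT)] := eqVneq A 0.
  rewrite det0 scale0r; split => [[-> //] | ->]; split => // U.
  by rewrite unitmxE det0 unitr0 in U.
rewrite unitmx_F2 => /eqP det1; rewrite det1 scale1r.
by split => [[_ ->] | ->] //; split => // A0; rewrite A0 eqxx in nzA.
Qed.

Lemma ord2_cases (a : 'I_2) : a = 0 \/ a = 1.
Proof. by case: a => [[|[|m]] Hm]; [left|right|]; try apply: val_inj. Qed.

Section Wedge.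

Variables (I : Type) (u v : I -> 'F_2).

Definition wedge p q := u p * v q + v p * u q.

Lemma wedgeC p q : wedge p q = wedge q p.
Proof. by rewrite /wedge addrC mulrC [u p * _]mulrC. Qed.

Lemma wedgexx p : wedge p p = 0.
Proof. by rewrite /wedge mulrC; case: (F2_cases (v p * u p)) => ->; apply/eqP. Qed.

Lemma wedge_orth p q0 q1 :
  wedge q0 q1 = 1 -> wedge p q0 = 0 -> wedge p q1 = 0 -> u p = 0 /\ v p = 0.
Proof.
rewrite /wedge; move: (u p) (v p) (u q0) (v q0) (u q1) (v q1) => x y a b c d.
by case: (F2_cases x) => ->; case: (F2_cases y) => ->; case: (F2_cases a) => ->;
  case: (F2_cases b) => ->; case: (F2_cases c) => ->; case: (F2_cases d) => ->;
  move=> /eqP + /eqP + /eqP.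
Qed.

Lemma wedge_radical p : (exists q, u q != 0) -> (exists q, v q != 0) ->
  (exists q, u q != v q) -> (forall q, wedge p q = 0) -> u p = 0 /\ v p = 0.
Proof.
move=> [q1 uq1] [q2 vq2] [q3 uvq3] rad.
case: (F2_cases (u p)) => up; case: (F2_cases (v p)) => vp //; exfalso.
- by move: (rad q1) uq1; rewrite /wedge up vp mul0r mul1r add0r => ->; rewrite eqxx.
- by move: (rad q2) vq2; rewrite /wedge up vp mul0r mul1r addr0 => ->; rewrite eqxx.
- move: (rad q3) uvq3; rewrite /wedge up vp !mul1r => /eqP.
  by rewrite addr_eq0 F2_oppr => /eqP ->; rewrite eqxx.
Qed.

End Wedge.

Lemma surj_bij (T : finType) (f : T -> T) : (forall i, exists j, f j = i) -> bijective f.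
Proof.
move=> /fin_all_exists [g fK]; have [g' gK g'K] := injF_bij (can_inj fK).
by exists g => // j; rewrite -[j]g'K fK.
Qed.

Lemma exists_unique_bijP (T : finType) (R : T -> T -> bool) :
  (forall i, exists! j, R i j) /\ (forall j, exists! i, R i j) <->
  exists2 f, bijective f & forall i j, R i j = (i == f j).
Proof.
split => [[rows cols] | [f [g fK gK] Rf]].
  have /fin_all_exists [f Rf] := cols.
  have Rf' i j : R i j = (i == f j).
    by apply/idP/eqP => [Rij | ->]; case: (Rf j) => // _ /(_ i Rij) ->.
  exists f => //; apply: injF_bij => j j' eqf.
  have [k [_ uniq]] := rows (f j).
  by rewrite -(uniq j) ?(uniq j') // Rf' ?eqf.
split => [i|j]; [exists (g i) | exists (f j)]; split => /= [|k]; rewrite Rf ?gK //.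
  by move=> /eqP ->; rewrite fK.
by move=> /eqP.
Qed.

Lemma det_mx2 (R : comRingType) (A : 'M[R]_2) : \det A = A 0 0 * A 1 1 - A 0 1 * A 1 0.
Proof.
rewrite (expand_det_row _ 0) !big_ord_recl big_ord0 addr0 /cofactor !det_mx11 !mxE /=.
rewrite !expr0 !expr1 !mul1r mulN1r mulrN.
by congr (A _ _ * A _ _ - A _ _ * A _ _); apply/val_inj.
Qed.

Lemma det_col_mx2 (R : comRingType) (u v : 'rV[R]_2) :
  \det (col_mx u v) = u 0 0 * v 0 1 - u 0 1 * v 0 0.
Proof.
rewrite det_mx2.
have -> : col_mx u v 0 = col_mx u v (lshift 1 0) by congr (fun_of_matrix _); apply: val_inj.
have -> : col_mx u v 1 = col_mx u v (rshift 1 0) by congr (fun_of_matrix _); apply: val_inj.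
by rewrite !col_mxEu !col_mxEd.
Qed.

Lemma unitmx_col_neq (R : comUnitRingType) n (A : 'M[R]_n) (c c' : 'I_n) :
  A \in unitmx -> c != c' -> exists p, A p c != A p c'.
Proof.
move=> U ne; apply/existsP; apply: contraT; rewrite negb_exists => /forallP /= eqc.
have : delta_mx c 0 = delta_mx c' 0 :> 'cV[R]_n.
  apply: (can_inj (mulKmx U)); rewrite -!colE.
  by apply/colP => p; rewrite !mxE; apply/eqP/negPn.
by move/matrixP/(_ c 0); rewrite !mxE !eqxx (negbTE ne) => /eqP; rewrite oner_eq0.
Qed.

Lemma unitmx_col_neq0 (R : comUnitRingType) n (A : 'M[R]_n) (c : 'I_n) :
  A \in unitmx -> exists p, A p c != 0.
Proof.
move=> U; apply/existsP; apply: contraT; rewrite negb_exists => /forallP /= col0.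
have : delta_mx c 0 = 0 :> 'cV[R]_n.
  apply: (can_inj (mulKmx U)); rewrite -colE mulmx0.
  by apply/colP => p; rewrite !mxE; apply/eqP/negPn.
by move/matrixP/(_ c 0); rewrite !mxE !eqxx => /eqP; rewrite oner_eq0.
Qed.

Lemma sum_mxvec_index (R : nmodType) m n (F : 'I_(m * n) -> R) :
  \sum_p F p = \sum_i \sum_j F (mxvec_index i j).
Proof.
rewrite pair_big (reindex (uncurry (@mxvec_index m n))) /=; last exact: curry_mxvec_bij.
by apply: eq_bigr => -[i j].
Qed.

Lemma eq_mxvec_index m n (i i' : 'I_m) (k k' : 'I_n) :
  (mxvec_index i k == mxvec_index i' k') = (i == i') && (k == k').
Proof.
apply/eqP/andP => [E|[/eqP-> /eqP->]] //.
have [g mxvecK _] := curry_mxvec_bij m n.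
by move: (mxvecK (i, k) isT) (mxvecK (i', k') isT) => /=; rewrite E => -> [-> ->].
Qed.

Section Blocks.

Context {b t : nat}.
Local Notation V := 'rV['F_2]_(b * (2 + t)).
Local Notation M := 'M['F_2]_(b * (2 + t)).

Definition idxA (i : 'I_b) (a : 'I_2) : 'I_(b * (2 + t)) := mxvec_index i (lshift t a).
Definition idxD (i : 'I_b) (c : 'I_t) : 'I_(b * (2 + t)) := mxvec_index i (rshift 2 c).

Lemma eq_idxA i i' a a' : (idxA i a == idxA i' a') = (i == i') && (a == a').
Proof. by rewrite eq_mxvec_index eq_lshift. Qed.

Lemma eq_idxA_idxD i a i' c : (idxA i a == idxD i' c) = false.
Proof. by rewrite eq_mxvec_index eq_lrshift andbF. Qed.

Variant idx_spec : 'I_(b * (2 + t)) -> Type :=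
  | IdxA i a : idx_spec (idxA i a)
  | IdxD i c : idx_spec (idxD i c).

Lemma idxP p : idx_spec p.
Proof.
case/mxvec_indexP: p => i k; rewrite -[k]splitK.
by case: (split k) => [a|c]; [apply: IdxA | apply: IdxD].
Qed.

Lemma AblkE (lam : M) i j a a' : Ablk lam i j a a' = lam (idxA i a) (idxA j a').
Proof. by rewrite !mxE. Qed.

Lemma CblkE (lam : M) i j c a : Cblk lam i j c a = lam (idxD i c) (idxA j a).
Proof. by rewrite !mxE. Qed.

Lemma vblockE (x : V) i k : vblock x i 0 k = x 0 (mxvec_index i k).
Proof. by rewrite !mxE. Qed.

Lemma vblockP (x y : V) : (forall j, vblock x j = vblock y j) <-> x = y.
Proof.
split => [eq_xy | -> //]; apply/rowP => p; case/mxvec_indexP: p => j k.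
by rewrite -!vblockE eq_xy.
Qed.

Lemma vblock_mulmx (x : V) (lam : M) j :
  vblock (x *m lam) j = \sum_i vblock x i *m mblock lam i j.
Proof.
apply/rowP => l; rewrite vblockE summxE mxE sum_mxvec_index.
by apply: eq_bigr => i _; rewrite mxE; apply: eq_bigr => k _; rewrite vblockE mxE.
Qed.

Lemma mblock_mulmx (lam mu : M) i j :
  mblock (lam *m mu) i j = \sum_l mblock lam i l *m mblock mu l j.
Proof.
apply/matrixP => k k'; rewrite summxE mxE mxE sum_mxvec_index.
by apply: eq_bigr => l _; rewrite mxE; apply: eq_bigr => m _; rewrite !mxE.
Qed.

Lemma mblock1 i j : mblock (1%:M : M) i j = (i == j)%:R%:M.
Proof.
apply/matrixP => k l; rewrite !mxE eq_mxvec_index.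
by case: (i == j); case: (k == l).
Qed.

Lemma mblockE (lam : M) i j :
  mblock lam i j = block_mx (Ablk lam i j) (Bblk lam i j) (Cblk lam i j) (Dblk lam i j).
Proof. by rewrite submxK. Qed.

Lemma Ablk_mulmx (lam mu : M) i j :
  Ablk (lam *m mu) i j = \sum_l (Ablk lam i l *m Ablk mu l j + Bblk lam i l *m Cblk mu l j).
Proof.
rewrite [LHS]/Ablk mblock_mulmx /ulsubmx !raddf_sum; apply: eq_bigr => l _.
by rewrite [mblock lam _ _]mblockE [mblock mu _ _]mblockE mulmx_block; apply: block_mxKul.
Qed.

Lemma Dblk_mulmx (lam mu : M) i j :
  Dblk (lam *m mu) i j = \sum_l (Cblk lam i l *m Bblk mu l j + Dblk lam i l *m Dblk mu l j).
Proof.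
rewrite [LHS]/Dblk mblock_mulmx /drsubmx !raddf_sum; apply: eq_bigr => l _.
by rewrite [mblock lam _ _]mblockE [mblock mu _ _]mblockE mulmx_block; apply: block_mxKdr.
Qed.

Lemma Ablk1 i : Ablk (1%:M : M) i i = 1%:M.
Proof. by rewrite /Ablk mblock1 eqxx (scalar_mx_block 2 t) block_mxKul. Qed.

Definition blockA (x : V) i : 'rV_2 := lsubmx (vblock x i).
Definition blockD (x : V) i : 'rV_t := rsubmx (vblock x i).
Definition partD (x : V) : 'rV_(b * t) := mxvec (\matrix_i blockD x i).

Lemma blockAE (x : V) i a : blockA x i 0 a = x 0 (idxA i a).
Proof. by rewrite !mxE. Qed.

Lemma blockA_mulmx (x : V) (lam : M) j :
  blockA (x *m lam) j = \sum_i (blockA x i *m Ablk lam i j + blockD x i *m Cblk lam i j).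
Proof.
rewrite [LHS]/blockA vblock_mulmx raddf_sum; apply: eq_bigr => i _.
by rewrite -[vblock x i]hsubmxK mblockE mul_row_block; apply: row_mxKl.
Qed.

Lemma blockD_mulmx (x : V) (lam : M) j :
  blockD (x *m lam) j = \sum_i (blockA x i *m Bblk lam i j + blockD x i *m Dblk lam i j).
Proof.
rewrite [LHS]/blockD vblock_mulmx raddf_sum; apply: eq_bigr => i _.
by rewrite -[vblock x i]hsubmxK mblockE mul_row_block; apply: row_mxKr.
Qed.

Lemma blocks_eq0 (x : V) : (forall i, blockA x i = 0) -> partD x = 0 -> x = 0.
Proof.
move=> A0 /rowP D0; apply/rowP => p; case/mxvec_indexP: p => i k.
have D0i : blockD x i = 0.
  by apply/rowP => c; move: (D0 (mxvec_index i c)); rewrite mxvecE !mxE.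
by rewrite -vblockE -[vblock x i]hsubmxK -/(blockA x i) -/(blockD x i) A0 D0i row_mx0 !mxE.
Qed.

Lemma mxvec_index_match (T : Type) m n (F : 'I_m -> 'I_n -> T) i k :
  match mxvec_indexP (mxvec_index i k) in is_mxvec_index p return T with
    isMxvecIndex i' k' => F i' k' end = F i k.
Proof.
move: {-1}(mxvec_index i k) (erefl (mxvec_index i k)) => p.
case: p / (mxvec_indexP p) => i' k' /eqP.
by rewrite eq_mxvec_index => /andP[/eqP-> /eqP->].
Qed.

Lemma DbigE (lam : M) i j c d :
  Dbig lam (mxvec_index i c) (mxvec_index j d) = Dblk lam i j c d.
Proof. by rewrite mxE !mxvec_index_match. Qed.

Lemma partD_mulmx (x : V) (lam : M) :
  (forall i, blockA x i = 0) -> partD (x *m lam) = partD x *m Dbig lam.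
Proof.
move=> A0; apply/rowP => q; case/mxvec_indexP: q => j c.
rewrite mxvecE mxE blockD_mulmx summxE mxE sum_mxvec_index; apply: eq_bigr => i _.
rewrite A0 mul0mx add0r mxE; apply: eq_bigr => d _.
by rewrite mxvecE DbigE !mxE.
Qed.

Lemma Dbig1 : Dbig (1%:M : M) = 1%:M.
Proof.
apply/matrixP => p q; case/mxvec_indexP: p => i c; case/mxvec_indexP: q => j d.
rewrite DbigE !mxE !eq_mxvec_index eq_rshift.
by case: (i == j); case: (c == d).
Qed.

Lemma Dbig_mulmx (lam mu : M) :
  (forall i l, Cblk lam i l = 0) -> Dbig (lam *m mu) = Dbig lam *m Dbig mu.
Proof.
move=> C0; apply/matrixP => p q; case/mxvec_indexP: p => i c; case/mxvec_indexP: q => j d.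
rewrite DbigE Dblk_mulmx summxE mxE sum_mxvec_index; apply: eq_bigr => l _.
by rewrite C0 mul0mx add0r mxE; apply: eq_bigr => e _; rewrite !DbigE.
Qed.

Lemma wedge_block_pivot (u v : 'I_(b * (2 + t)) -> 'F_2) :
  (exists q, u q != 0) -> (exists q, v q != 0) -> (exists q, u q != v q) ->
  (forall i c q, wedge u v (idxD i c) q = 0) ->
  (forall i i' a a', i != i' -> wedge u v (idxA i a) (idxA i' a') = 0) ->
  (forall i c, u (idxD i c) = 0 /\ v (idxD i c) = 0) /\
  exists i0, wedge u v (idxA i0 0) (idxA i0 1) = 1 /\
    forall i a, i != i0 -> u (idxA i a) = 0 /\ v (idxA i a) = 0.
Proof.
move=> hu hv huv wD wA; split => [i c|]; first exact: wedge_radical (wD i c).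
have [i0 /eqP w1|none] := pickP (fun i => wedge u v (idxA i 0) (idxA i 1) == 1).
  by exists i0; split => // i a ne; apply: (wedge_orth w1); apply: wA.
(* Otherwise u ^ v vanishes identically, contradicting the independence of u and v. *)
have w0 p q : wedge u v p q = 0.
  case: (idxP p) => [i a|i c]; last exact: wD.
  case: (idxP q) => [i' a'|i' c]; last by rewrite wedgeC wD.
  have [<-|ne] := eqVneq i i'; last exact: wA.
  have w01 : wedge u v (idxA i 0) (idxA i 1) = 0.
    by move: (none i) => /=; case: (F2_cases (wedge u v (idxA i 0) (idxA i 1))) => ->.
  by case: (ord2_cases a) => ->; case: (ord2_cases a') => ->; rewrite ?wedgexx // wedgeC.
have [p up] := hu; have [up0 _] := wedge_radical hu hv huv (w0 p).
by rewrite up0 eqxx in up.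
Qed.

End Blocks.

Section Cross.

Context {b t : nat}.
Variable bv : 'rV['F_2]_t.
Local Notation V := 'rV['F_2]_(b * (2 + t)).
Local Notation M := 'M['F_2]_(b * (2 + t)).

Definition omega (x y : V) (j : 'I_b) : 'F_2 :=
  x 0 (idxA j 0) * y 0 (idxA j 1) + x 0 (idxA j 1) * y 0 (idxA j 0).

Lemma omega_det x y j : omega x y j = \det (col_mx (blockA x j) (blockA y j)).
Proof. by rewrite det_col_mx2 !blockAE F2_oppr. Qed.

Lemma det_Ablk (lam : M) i j :
  \det (Ablk lam i j) = omega (row (idxA i 0) lam) (row (idxA i 1) lam) j.
Proof. by rewrite det_mx2 !AblkE F2_oppr /omega !mxE. Qed.

Definition cross_basis : 'M['F_2]_(b, b * (2 + t)) :=
  \matrix_l mxvec (\matrix_j ((j == l)%:R *: row_mx 0 bv)).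

Lemma vblock_cross_basis (s : 'rV_b) j : vblock (s *m cross_basis) j = s 0 j *: row_mx 0 bv.
Proof.
apply/rowP => k; rewrite vblockE mxE (bigD1 j) //= big1 => [|l nl];
  rewrite /cross_basis !mxE mxvecE !mxE.
  by rewrite eqxx mul1r addr0.
by rewrite eq_sym (negbTE nl) mul0r mulr0.
Qed.

Definition crossV (x y : V) : V := \row_j omega x y j *m cross_basis.

Lemma circV_cross x y : circV bv x y = x + y + crossV x y.
Proof.
apply/rowP => p; case/mxvec_indexP: p => j k.
by rewrite mxvecE mxE [in RHS]mxE [in RHS]mxE /crossV -!vblockE vblock_cross_basis !mxE.
Qed.

Definition cross_hom (lam : M) : Prop :=
  forall x y, crossV x y *m lam = crossV (x *m lam) (y *m lam).

Lemma in_H_cross lam : in_H bv lam <-> lam \in unitmx /\ cross_hom lam.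
Proof.
split=> -[U hom]; split=> // x y; move: (hom x y); rewrite !circV_cross !mulmxDl.
  exact: addrI.
by move=> ->.
Qed.

Lemma cross_hom_invmx lam : lam \in unitmx -> cross_hom lam -> cross_hom (invmx lam).
Proof.
move=> U hom x y; have := hom (x *m invmx lam) (y *m invmx lam).
by rewrite !mulmxKV // => <-; rewrite mulmxK.
Qed.

Lemma row_free_cross_basis : bv != 0 -> row_free cross_basis.
Proof.
move=> bv_neq0; apply/inj_row_free => s s0; apply/rowP => j; rewrite mxE.
apply/eqP; apply: contraR bv_neq0 => sj; apply/eqP/rowP => c.
move/rowP/(_ (mxvec_index j (rshift 2 c))): s0.
rewrite -vblockE vblock_cross_basis mxE row_mxEr mxE => /eqP.
by rewrite mulf_eq0 (negbTE sj) mxE => /eqP.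
Qed.

Definition Adet (lam : M) : 'M['F_2]_b := \matrix_(i, j) \det (Ablk lam i j).

Lemma omega_delta_pair i :
  \row_j omega (delta_mx 0 (idxA i 0)) (delta_mx 0 (idxA i 1)) j = delta_mx 0 i.
Proof.
apply/rowP => j; rewrite /omega !mxE !eq_idxA eqxx /=.
by case: (j == i); rewrite ?mulr1 ?mulr0 addr0.
Qed.

Lemma cross_homP lam : bv != 0 ->
  cross_hom lam <->
  cross_basis *m lam = Adet lam *m cross_basis /\
  forall x y, \row_j omega (x *m lam) (y *m lam) j = \row_j omega x y j *m Adet lam.
Proof.
move=> bv_neq0; split => [hom | [P1 P2] x y]; last by rewrite /crossV -mulmxA P1 mulmxA P2.
have P1 : cross_basis *m lam = Adet lam *m cross_basis.
  apply/row_matrixP => i; rewrite !row_mul.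
  have -> : row i (Adet lam) = \row_j omega (row (idxA i 0) lam) (row (idxA i 1) lam) j.
    by apply/rowP => j; rewrite !mxE det_Ablk.
  by rewrite !rowE -(omega_delta_pair i); apply: hom.
split => // x y; apply: (row_free_inj (row_free_cross_basis bv_neq0)).
by rewrite /= -mulmxA -P1 mulmxA; symmetry; apply: hom.
Qed.

Lemma cross_basis_mulmx lam :
  cross_basis *m lam = Adet lam *m cross_basis <->
  forall i j, bv *m Cblk lam i j = 0 /\ bv *m Dblk lam i j = \det (Ablk lam i j) *: bv.
Proof.
have L i j :
    vblock (row i (cross_basis *m lam)) j = row_mx (bv *m Cblk lam i j) (bv *m Dblk lam i j).
  rewrite row_mul rowE vblock_mulmx (bigD1 i) //= big1 => [|l nl].
    by rewrite vblock_cross_basis mxE !eqxx scale1r mblockE mul_row_block !mul0mx !add0r addr0.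
  by rewrite vblock_cross_basis mxE (negbTE nl) scale0r mul0mx.
have R i j :
    vblock (row i (Adet lam *m cross_basis)) j = row_mx 0 (\det (Ablk lam i j) *: bv).
  by rewrite row_mul vblock_cross_basis 2!mxE scale_row_mx scaler0.
split => [E i j | H].
  by move: (L i j); rewrite E R => /eq_row_mx [<- <-].
apply/row_matrixP => i; apply/vblockP => j; rewrite L R.
by case: (H i j) => -> ->.
Qed.

Lemma cross_hom_col lam j : bv != 0 -> lam \in unitmx -> cross_hom lam ->
  (forall i, Cblk lam i j = 0) /\
  exists i0, \det (Ablk lam i0 j) = 1 /\ forall i, i != i0 -> Ablk lam i j = 0.
Proof.
move=> bv_neq0 U /(cross_homP _ bv_neq0) [_ P2].
pose u p := lam p (idxA j 0); pose v p := lam p (idxA j 1).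
have wedgeE p q :
    wedge u v p q = \sum_l omega (delta_mx 0 p) (delta_mx 0 q) l * \det (Ablk lam l j).
  transitivity (omega (row p lam) (row q lam) j); first by rewrite /omega !mxE.
  move/rowP/(_ j): (P2 (delta_mx 0 p) (delta_mx 0 q)); rewrite -!rowE mxE => ->.
  by rewrite mxE; apply: eq_bigr => l _; rewrite !mxE.
have wD i c q : wedge u v (idxD i c) q = 0.
  by rewrite wedgeE big1 // => l _; rewrite /omega !mxE !eq_idxA_idxD !andbF !mul0r add0r mul0r.
have wA i i' a a' : i != i' -> wedge u v (idxA i a) (idxA i' a') = 0.
  move=> ne; rewrite wedgeE big1 // => l _; rewrite /omega !mxE !eq_idxA.
  have [->|nl] := eqVneq l i; rewrite ?(negbTE ne) ?(negbTE nl) ?andbF /=.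
    by rewrite !mulr0 add0r mul0r.
  by rewrite !mul0r add0r mul0r.
have col_eq0 p : u p = 0 -> v p = 0 -> forall a, lam p (idxA j a) = 0.
  by move=> up vp a; case: (ord2_cases a) => ->.
have ne01 : idxA j 0 != idxA j 1 :> 'I_(b * (2 + t)) by rewrite eq_idxA eqxx.
have [uvD [i0 [w1 uvA]]] :=
  wedge_block_pivot (unitmx_col_neq0 _ U) (unitmx_col_neq0 _ U) (unitmx_col_neq U ne01) wD wA.
split => [i|].
  by apply/matrixP => c a; rewrite CblkE mxE; case: (uvD i c) => *; apply: col_eq0.
exists i0; split; first by rewrite det_Ablk /omega !mxE; apply: w1.
move=> i ne; apply/matrixP => a a'; rewrite AblkE mxE.
by case: (uvA i a ne) => *; apply: col_eq0.
Qed.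

Lemma cross_hom_Cblk lam : bv != 0 -> lam \in unitmx -> cross_hom lam ->
  forall i j, Cblk lam i j = 0.
Proof. by move=> bv_neq0 U hom i j; case: (cross_hom_col j bv_neq0 U hom) => ->. Qed.

(* The inverse is in H as well, so its C-blocks vanish and the A-block (i, i) of
   lam *m invmx lam = 1 is the sum of the products of A-blocks through block-row i. *)
Lemma cross_hom_row lam : bv != 0 -> lam \in unitmx -> cross_hom lam ->
  forall i, exists j, Ablk lam i j != 0.
Proof.
move=> bv_neq0 U hom i; apply/existsP; apply: contraT; rewrite negb_exists => /forallP /= A0.
have Ui : invmx lam \in unitmx by rewrite unitmx_inv.
have C0 := cross_hom_Cblk bv_neq0 Ui (cross_hom_invmx U hom).
have := Ablk1 (t := t) i; rewrite -(mulmxV U) Ablk_mulmx big1 => [|l _].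
  by move/matrixP/(_ 0 0); rewrite !mxE eqxx => /eqP; rewrite eq_sym oner_eq0.
by rewrite (eqP (negPn (A0 l))) mul0mx C0 mulmx0 addr0.
Qed.

Lemma cross_hom_pivot lam : bv != 0 -> lam \in unitmx -> cross_hom lam ->
  exists f, [/\ bijective f, forall i j, (Ablk lam i j != 0) = (i == f j)
              & forall j, \det (Ablk lam (f j) j) = 1].
Proof.
move=> bv_neq0 U hom; have /fin_all_exists [f pivot] : forall j, exists i0,
    \det (Ablk lam i0 j) = 1 /\ forall i, i != i0 -> Ablk lam i j = 0.
  by move=> j; case: (cross_hom_col j bv_neq0 U hom).
have Af i j : (Ablk lam i j != 0) = (i == f j).
  have [->|ne] := eqVneq i (f j); last by case: (pivot j) => _ -> //; rewrite eqxx.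
  case: (pivot j) => det1 _; apply/negP => /eqP A0.
  by move: det1; rewrite A0 det0 => /eqP; rewrite eq_sym oner_eq0.
exists f; split => // [|j]; last by case: (pivot j).
apply: surj_bij => i; have [j] := cross_hom_row bv_neq0 U hom i.
by rewrite Af => /eqP ->; exists j.
Qed.

Lemma cross_hom_Dbig lam : bv != 0 -> lam \in unitmx -> cross_hom lam -> Dbig lam \in unitmx.
Proof.
move=> bv_neq0 U hom; have C0 := cross_hom_Cblk bv_neq0 U hom.
have DD : Dbig lam *m Dbig (invmx lam) = 1%:M by rewrite -Dbig_mulmx // mulmxV // Dbig1.
exact: (mulmx1_unit DD).1.
Qed.

Section Pivot.

Variables (lam : M) (f : 'I_b -> 'I_b).
Hypotheses (C0 : forall i j, Cblk lam i j = 0) (Aoff : forall i j, i != f j -> Ablk lam i j = 0).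

Lemma blockA_mulmx_pivot x j : blockA (x *m lam) j = blockA x (f j) *m Ablk lam (f j) j.
Proof.
rewrite blockA_mulmx (bigD1 (f j)) //= big1 => [|i ne]; first by rewrite C0 mulmx0 !addr0.
by rewrite Aoff // C0 !mulmx0 addr0.
Qed.

Lemma omega_mulmx_pivot x y :
  \row_j omega (x *m lam) (y *m lam) j = \row_j omega x y j *m Adet lam.
Proof.
apply/rowP => j; rewrite !mxE omega_det !blockA_mulmx_pivot -mul_col_mx det_mulmx -omega_det.
rewrite (bigD1 (f j)) //= big1 ?addr0 => [|i ne]; first by rewrite !mxE.
by rewrite !mxE Aoff // det0 mulr0.
Qed.

Lemma unitmx_pivot : (forall j, Ablk lam (f j) j \in unitmx) -> bijective f ->
  Dbig lam \in unitmx -> lam \in unitmx.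
Proof.
move=> A_unit [g fK gK] D_unit; rewrite -row_free_unit; apply/inj_row_free => x x_lam0.
have xA0 i : blockA x i = 0.
  rewrite -(gK i); apply: (can_inj (mulmxK (A_unit (g i)))).
  by rewrite -blockA_mulmx_pivot x_lam0 mul0mx; apply/rowP => a; rewrite blockAE !mxE.
have xD0 : partD x = 0.
  apply: (can_inj (mulmxK D_unit)); rewrite -partD_mulmx // x_lam0 mul0mx.
  by apply/rowP => q; case/mxvec_indexP: q => j c; rewrite mxvecE !mxE.
exact: blocks_eq0.
Qed.

End Pivot.

End Cross.

Theorem theorem5 (t b : nat) (ht : (1 <= t)%N) (hb : (1 <= b)%N)
  (bv : 'rV['F_2]_t) (hbv : bv != 0) (lam : 'M['F_2]_(b * (2 + t))) :
  in_H bv lam <->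
  [/\ (* (1) *)
      [/\ (forall i : 'I_b, exists! j : 'I_b, Ablk lam i j != 0),
          (forall j : 'I_b, exists! i : 'I_b, Ablk lam i j != 0)
        & (forall i j : 'I_b, Ablk lam i j != 0 -> Ablk lam i j \in unitmx)],
      (* (2) B_ij arbitrary: no condition; (3) *)
      (forall i j : 'I_b, Cblk lam i j = 0),
      (* (4) *)
      (forall i j : 'I_b,
          (Ablk lam i j = 0 -> bv *m Dblk lam i j = 0) /\
          (Ablk lam i j \in unitmx -> bv *m Dblk lam i j = bv))
    & Dbig lam \in unitmx].
Proof.
pose nz i j := Ablk lam i j != 0.
split => [/in_H_cross [U hom] | [[rows cols A_unit] C0 D_cond D_unit]].
- have [f [f_bij Af det1]] := cross_hom_pivot hbv U hom.
  have A_unit i j : Ablk lam i j != 0 -> Ablk lam i j \in unitmx.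
    by rewrite Af unitmx_F2 => /eqP ->; rewrite det1.
  have [rows cols] := (exists_unique_bijP nz).2 (ex_intro2 _ _ f f_bij Af).
  have [/cross_basis_mulmx bvD _] := (cross_homP lam hbv).1 hom.
  split; [by [] | exact: cross_hom_Cblk hbv U hom | move=> i j | exact: cross_hom_Dbig hbv U hom].
  by apply/det_scaleP; [apply: A_unit | case: (bvD i j)].
- have [f f_bij Af] := (exists_unique_bijP nz).1 (conj rows cols); rewrite /nz in Af.
  have Aoff i j : i != f j -> Ablk lam i j = 0 by rewrite -[_ == _]Af => /negPn/eqP.
  apply/in_H_cross; split.
    by apply: (unitmx_pivot C0 Aoff) => // j; apply: A_unit; rewrite Af.
  apply/(cross_homP lam hbv); split; last exact: omega_mulmx_pivot C0 Aoff.
  apply/cross_basis_mulmx => i j; rewrite C0 mulmx0; split => //.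
  by apply/det_scaleP; [apply: A_unit | apply: D_cond].
Qed.
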